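(* Let $X=(x_{ij})$ be a $q$-generic $n\times d$ matrix and work in the algebra $K_q\langle x_{ij}\rangle/(\text{$q$-generic relations})$. Let $1\le r\le d$, let $I=(i_1<i_2<\cdots<i_{d+r})$ be an increasing tuple of elements of $[n]$, and let $J=(j_1,\dots,j_{d-r})$ be a tuple of elements of $[n]$. For $1\le s\le d+r$ let $I_{(s)}$ denote $I$ with $i_s$ removed. All subsets of $I$ are listed in increasing order. Then $$\sum_{s=1}^{d+r}(-q)^{2(r-1)-\ell(I_{(s)}|i_{s})}\sum_{\substack{\Lambda'\subseteq I_{(s)}\\ |\Lambda'|=r-1}}(-q)^{-\ell(I_{(s)}\setminus\Lambda'\,|\,\Lambda')}\big[I_{(s)}\setminus\Lambda'\big]\big[\Lambda'|i_{s}|J\big] =\Big(\sum_{t=0}^{r-1}q^{2t}\Big)\sum_{\substack{\Lambda\subseteq I\\ |\Lambda|=r}}(-q)^{-\ell(I\setminus\Lambda|\Lambda)}\big[I\setminus\Lambda\big]\big[\Lambda|J\big].$$ In particular, the Young symmetry expression for $(I,J)$ with parameter $r$ is a $K_q$-linear combination of Young symmetry expressions with parameter $r-1$ (for the pairs $(I_{(s)},(i_s,J))$), up to the scalar factor $\sum_{t=0}^{r-1}q^{2t}$.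
   Context: $K_q$ is a field of characteristic $0$ with a distinguished element $q\neq0$ that is not a root of unity. An $n\times m$ matrix $X=(x_{ij})$ is $q$-generic if its entries satisfy, for all $i<j$ and $k<l$: $x_{kj}x_{ki}=q\,x_{ki}x_{kj}$; $x_{jk}x_{ik}=q\,x_{ik}x_{jk}$; $x_{jk}x_{il}=x_{il}x_{jk}$; $x_{jl}x_{ik}=x_{ik}x_{jl}+(q-q^{-1})x_{il}x_{jk}$. For a square matrix $A=(a_{ij})$ of size $m$, the quantum determinant is $\det_qA=\sum_{\sigma\in S_m}(-q)^{-\ell(\sigma)}a_{1\sigma1}a_{2\sigma2}\cdots a_{m\sigma m}$. For a tuple $K=(k_1,\dots,k_m)$ of elements of $[n]$ (with $m$ at most the number of columns), $[K]$ denotes $\det_q$ of the $m\times m$ matrix whose $t$-th row is $(x_{k_t1},\dots,x_{k_tm})$. For tuples $A,B,\dots$, $A|B$ denotes their concatenation and $[A|B]$ the corresponding quantum minor. For a tuple $(a_1,\dots,a_m)$ of distinct integers, $\ell(a_1,\dots,a_m)$ is its number of inversions, i.e. the number of pairs $u<v$ with $a_u>a_v$ (the minimal number of adjacent swaps needed to sort it). *)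

From HB Require Import structures.
From mathcomp Require Import all_boot all_order all_algebra all_fingroup.
Set Implicit Arguments. Unset Strict Implicit. Unset Printing Implicit Defensive.
Import GRing.Theory.
Local Open Scope ring_scope.

Definition inv_count (s : seq nat) : nat :=
  (\sum_(u < size s) \sum_(v < size s | (u < v)%N)
      ((nth 0%N s v < nth 0%N s u)%N : nat))%N.

Definition perm_len m (σ : 'S_m) : nat := inv_count [seq val (σ t) | t <- enum 'I_m].

Definition seq_len n (s : seq 'I_n) : nat := inv_count (map val s).

(* the q-generic relations on the entries of an n x d matrix x with entries
   in a K-algebra A (rows indexed by 'I_n, columns by 'I_d, 0-based) *)
Definition qgeneric (K : fieldType) (A : algType K) (n d : nat) (q : K)
    (x : 'I_n -> 'I_d -> A) : Prop :=
  [/\ (forall (k : 'I_n) (i j : 'I_d), (i < j)%N -> x k j * x k i = q *: (x k i * x k j)),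
      (forall (i j : 'I_n) (k : 'I_d), (i < j)%N -> x j k * x i k = q *: (x i k * x j k)),
      (forall (i j : 'I_n) (k l : 'I_d), (i < j)%N -> (k < l)%N ->
          x j k * x i l = x i l * x j k) &
      (forall (i j : 'I_n) (k l : 'I_d), (i < j)%N -> (k < l)%N ->
          x j l * x i k = x i k * x j l + (q - q^-1) *: (x i l * x j k))].

(* entry x_{ij} addressed by natural numbers (0 outside the matrix) *)
Definition xent (K : fieldType) (A : algType K) (n d : nat) (x : 'I_n -> 'I_d -> A)
    (i j : nat) : A :=
  match (insub i : option 'I_n), (insub j : option 'I_d) with
  | Some i', Some j' => x i' j'
  | _, _ => 0
  end.

(* [K] : quantum determinant of the m x m matrix whose t-th row is
   (x_{k_t 1}, ..., x_{k_t m}), m = size K (used only with m <= d) *)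
Definition qminor (K : fieldType) (A : algType K) (n d : nat) (q : K)
    (x : 'I_n -> 'I_d -> A) (s : seq 'I_n) : A :=
  \sum_(σ : 'S_(size s))
     ((- q) ^ (- (perm_len σ)%:Z)) *:
       \prod_(t < size s) xent x (nth 0%N (map val s) t) (σ t).

From HB Require Import structures.
From mathcomp Require Import all_boot all_order all_algebra all_fingroup.
From mathcomp Require Import zify ring.
Import GRing.Theory.
Local Open Scope ring_scope.
Set Implicit Arguments. Unset Strict Implicit. Unset Printing Implicit Defensive.

(* Write I = I1 ++ i_s :: I2. Adjoining i_s to a subset L' of I_(s) of size r-1 is a bijection
   onto the subsets L of I of size r containing i_s, and the two corresponding terms agree up to
   a power of -q: bringing i_s to its sorted place in [L'|i_s|J] crosses the elements of L2 = L'
   cap I2, and each such adjacent row swap multiplies a quantum minor by (-q)^-1 (pair the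
   permutations s and (t t+1) s in the Leibniz expansion and use the 2 x 2 exchange relation).
   Collecting the inversion counts, the term of L' becomes q^(2 m) times the term of L, where m is
   the number of elements of L smaller than i_s. As i_s runs through L, m runs through
   0, ..., r-1, which produces the factor sum_(t < r) q^(2 t).
   Only q != 0 and the relations between entries in distinct rows and columns are used. *)

Section Inversions.
Local Open Scope nat_scope.

Lemma inv_count_cons a s :
  inv_count (a :: s) = count (fun b => b < a) s + inv_count s.
Proof.
have sum_nth_count (P : pred nat) (t : seq nat) :
    \sum_(v < size t) P (nth 0 t v) = count P t.
  elim: t => [|b t IHt]; first by rewrite big_ord0.
  by rewrite big_ord_recl IHt.
rewrite /inv_count /= big_ord_recl; congr (_ + _).
  by rewrite big_mkcond big_ord_recl -sum_nth_count.
apply: eq_bigr => u _; rewrite big_mkcond big_ord_recl [RHS]big_mkcond.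
by apply: eq_bigr => v _; rewrite !lift0 ltnS.
Qed.

Lemma inv_count_insert s a t :
  inv_count (s ++ a :: t) =
  inv_count (s ++ t) + count (fun b => a < b) s + count (fun b => b < a) t.
Proof.
elim: s => [|b s IHs] /=; first by rewrite inv_count_cons addn0 addnC.
rewrite !inv_count_cons IHs !count_cat /=.
by case: (ltnP a b) => /=; lia.
Qed.

Lemma inv_count_sorted s : sorted ltn s -> inv_count s = 0.
Proof.
elim: s => [|a s IHs] /= sorted_as; first by rewrite /inv_count big_ord0.
rewrite inv_count_cons IHs ?(path_sorted sorted_as) // addn0.
apply/eqP; rewrite -leqn0 leqNgt -has_count; apply/hasP => -[b b_s].
by have /allP/(_ b b_s) := order_path_min ltn_trans sorted_as; lia.
Qed.

Lemma inv_count_swap s a b t : a < b ->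
  inv_count (s ++ b :: a :: t) = (inv_count (s ++ a :: b :: t)).+1.
Proof.
move=> lt_ab; rewrite -cat_rcons inv_count_insert [in RHS]inv_count_insert.
rewrite cat_rcons -cats1 !count_cat /= lt_ab ltnNge (ltnW lt_ab) /=; lia.
Qed.

End Inversions.

Lemma big_ord_enum (R : Type) (idx : R) (op : R -> R -> R) m (F : 'I_m -> R) :
  \big[op/idx]_(t < m) F t = \big[op/idx]_(t <- enum 'I_m) F t.
Proof. by rewrite enumT. Qed.

Lemma enum_ord_adjacent m (i j : 'I_m) : val j = (val i).+1 ->
  exists P S, [/\ enum 'I_m = P ++ i :: j :: S, i \notin P ++ S & j \notin P ++ S].
Proof.
move=> ji; exists (take i (enum 'I_m)), (drop j.+1 (enum 'I_m)).
have nth_enum (k : 'I_m) : nth i (enum 'I_m) (val k) = k.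
  by apply: val_inj; rewrite /= nth_enum_ord.
have enumE : enum 'I_m = take i (enum 'I_m) ++ i :: j :: drop j.+1 (enum 'I_m).
  rewrite -{1}(cat_take_drop i (enum 'I_m)) (drop_nth i) ?size_enum_ord //.
  rewrite (drop_nth i) ?size_enum_ord -ji ?ltn_ord //.
  by congr (_ ++ _ :: _ :: _); apply: nth_enum.
have := enum_uniq 'I_m; rewrite {1}enumE (perm_uniq (permEl (perm_catCA _ [:: i; j] _))) /=.
by rewrite inE negb_or => /and3P[/andP[_ ->] -> _].
Qed.

Lemma perm_len_tperm m (s : 'S_m) (i j : 'I_m) : val j = (val i).+1 ->
  (s i < s j)%N -> perm_len (tperm i j * s)%g = (perm_len s).+1.
Proof.
move=> ji lt_sij; have [P [S [enumE iPS jPS]]] := enum_ord_adjacent ji.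
have tpermsE : {in P ++ S, (tperm i j * s)%g =1 s}.
  move=> t tPS; rewrite permM tpermD //.
    by apply: contraNneq iPS => ->.
  by apply: contraNneq jPS => ->.
have mapE Q : {subset Q <= P ++ S} ->
    [seq val ((tperm i j * s)%g t) | t <- Q] = [seq val (s t) | t <- Q].
  by move=> sub_Q; apply/eq_in_map => t /sub_Q/tpermsE ->.
have sub_P : {subset P <= P ++ S} by move=> t; rewrite mem_cat => ->.
have sub_S : {subset S <= P ++ S} by move=> t; rewrite mem_cat orbC => ->.
rewrite /perm_len enumE !map_cat /= (mapE P sub_P) (mapE S sub_S).
by rewrite !permM tpermL tpermR inv_count_swap.
Qed.

Lemma sum_perm_tperm_pairs (V : nmodType) m (f : 'S_m -> V) (i j : 'I_m) :
  i != j -> \sum_(s : 'S_m) f s = \sum_(s : 'S_m | (s i < s j)%N) (f s + f (tperm i j * s)%g).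
Proof.
move=> neq_ij; rewrite (bigID (fun s : 'S_m => (s i < s j)%N)) big_split /=; congr (_ + _).
rewrite (reindex_inj (mulgI (tperm i j))); apply: eq_bigl => s.
rewrite !permM tpermL tpermR -leqNgt leq_eqVlt orbC; case: ltngtP => //= /val_inj.
by move/perm_inj=> eq_ij; rewrite eq_ij eqxx in neq_ij.
Qed.

Lemma expfzNS (F : fieldType) (z : F) k : z ^ (- k.+1%:Z) = z ^ (- k%:Z) * z^-1.
Proof. by rewrite -!exprnN exprSr invfM mulrC. Qed.

Lemma sum_sorted_count (T : eqType) (V : nmodType) (lt : rel T) (f : nat -> V) (s : seq T) :
  irreflexive lt -> transitive lt -> sorted lt s ->
  \sum_(a <- s) f (count (lt a) s) = \sum_(t < size s) f t.
Proof.
move=> lt_irr lt_trans; elim: s => [|a s IHs] /= sorted_as; first by rewrite big_nil big_ord0.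
have lt_as : {in s, forall b, lt a b} by apply/allP; exact: order_path_min sorted_as.
rewrite big_cons big_ord_recr -IHs ?(path_sorted sorted_as) // addrC lt_irr.
congr (_ + f _); last by apply/eqP; rewrite -all_count; apply/allP.
apply: eq_big_seq => b /lt_as lt_ab.
suff /negbTE -> : ~~ lt b a by [].
by apply/negP => /(lt_trans _ _ _ lt_ab); rewrite lt_irr.
Qed.

Lemma sum_subsets_setU1 (T : finType) (V : nmodType) (S : {set T}) (a : T) k
    (F : {set T} -> V) : a \in S ->
  \sum_(L : {set T} | (L \subset S :\ a) && (#|L| == k)) F (a |: L) =
  \sum_(L : {set T} | [&& L \subset S, #|L| == k.+1 & a \in L]) F L.
Proof.
move=> aS; rewrite [RHS](reindex_onto (fun L => a |: L) (fun L => L :\ a)) /=; last first.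
  by move=> L /and3P[_ _ aL]; rewrite setD1K.
apply: eq_bigl => L; rewrite subsetD1 subUset sub1set aS.
have [aL|aL] /= := boolP (a \in L).
  rewrite andbF; apply/esym/negbTE; rewrite negb_and orbC.
  by apply/orP; left; apply: contraTneq aL => <-; rewrite !inE eqxx.
by rewrite setU1K // eqxx cardsU1 aL add1n eqSS setU11 !andbT.
Qed.

Lemma seq_len_insert n (s t : seq 'I_n) (a : 'I_n) :
  seq_len (s ++ a :: t) =
  (seq_len (s ++ t) + count (fun b : 'I_n => a < b) s + count (fun b : 'I_n => b < a) t)%N.
Proof. by rewrite /seq_len !map_cat inv_count_insert !count_map. Qed.

Lemma count_all_in (T : eqType) (P : pred T) (s : seq T) :
  {in s, forall b, P b} -> count P s = size s.
Proof. by move=> Ps; rewrite -count_predT; apply: eq_in_count. Qed.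

Lemma count_none_in (T : eqType) (P : pred T) (s : seq T) :
  {in s, forall b, ~~ P b} -> count P s = 0%N.
Proof. by move=> nPs; rewrite -(count_pred0 s); apply: eq_in_count => b /nPs/negbTE. Qed.

Lemma seq_len_insert_split n (s1 s2 t1 t2 : seq 'I_n) (a : 'I_n) :
  {in s1 ++ t1, forall b : 'I_n, b < a}%N -> {in s2 ++ t2, forall b : 'I_n, a < b}%N ->
  seq_len ((s1 ++ s2) ++ t1 ++ a :: t2) = (seq_len ((s1 ++ s2) ++ t1 ++ t2) + size s2)%N.
Proof.
move=> lt_a gt_a.
have ngt_a b : b \in s1 ++ t1 -> ~~ (a < b)%N by move/lt_a => lt_ba; rewrite -leqNgt ltnW.
have nlt_a b : b \in s2 ++ t2 -> ~~ (b < a)%N by move/gt_a => lt_ab; rewrite -leqNgt ltnW.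
rewrite catA seq_len_insert -!catA !count_cat.
rewrite (count_none_in (s := s1)) ?(count_all_in (s := s2)) ?(count_none_in (s := t1))
        ?(count_none_in (s := t2)) ?add0n ?addn0 // => b b_in;
  by rewrite ?ngt_a ?nlt_a ?gt_a // mem_cat b_in ?orbT.
Qed.

Section QuantumMinors.
Variables (K : fieldType) (q : K) (A : algType K) (n d : nat).
Variable x : 'I_n -> 'I_d -> A.
Hypotheses (q_neq0 : q != 0) (qgen_x : qgeneric q x).

Lemma xent_row_out i j : (n <= i)%N -> xent x i j = 0.
Proof. by move=> le_ni; rewrite /xent insubF // ltnNge le_ni. Qed.

Lemma xent_col_out i j : (d <= j)%N -> xent x i j = 0.
Proof. by move=> le_dj; rewrite /xent; case: insub => // ?; rewrite insubF // ltnNge le_dj. Qed.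

Lemma xentE i j (lt_in : (i < n)%N) (lt_jd : (j < d)%N) :
  xent x i j = x (Ordinal lt_in) (Ordinal lt_jd).
Proof. by rewrite /xent (insubT (fun i => i < n)%N lt_in) (insubT (fun j => j < d)%N lt_jd). Qed.

Lemma xent_commute a c k l : (a < c)%N -> (k < l)%N ->
  xent x c k * xent x a l = xent x a l * xent x c k.
Proof.
case: qgen_x => _ _ comm _ lt_ac lt_kl.
have [lt_cn|/xent_row_out xc0] := ltnP c n; last by rewrite !xc0 mul0r mulr0.
have [lt_ld|/xent_col_out xl0] := ltnP l d; last by rewrite !xl0 mul0r mulr0.
have lt_an : (a < n)%N by lia.
have lt_kd : (k < d)%N by lia.
rewrite !xentE; exact: (comm (Ordinal lt_an) (Ordinal lt_cn) (Ordinal lt_kd) (Ordinal lt_ld)).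
Qed.

Lemma xent_exchange a c k l : (a < c)%N -> (k < l)%N ->
  xent x c l * xent x a k =
  xent x a k * xent x c l + (q - q^-1) *: (xent x a l * xent x c k).
Proof.
case: qgen_x => _ _ _ exch lt_ac lt_kl.
have [lt_cn|/xent_row_out xc0] := ltnP c n; last by rewrite !xc0 !(mul0r, mulr0, scaler0, addr0).
have [lt_ld|/xent_col_out xl0] := ltnP l d; last by rewrite !xl0 !(mul0r, mulr0, scaler0, addr0).
have lt_an : (a < n)%N by lia.
have lt_kd : (k < d)%N by lia.
rewrite !xentE; exact: (exch (Ordinal lt_an) (Ordinal lt_cn) (Ordinal lt_kd) (Ordinal lt_ld)).
Qed.

Lemma xent_qdet2_swap a c k l : (a < c)%N -> (k < l)%N ->
  xent x c k * xent x a l + (- q)^-1 *: (xent x c l * xent x a k) =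
  (- q)^-1 *: (xent x a k * xent x c l + (- q)^-1 *: (xent x a l * xent x c k)).
Proof.
move=> lt_ac lt_kl; rewrite (xent_commute lt_ac lt_kl) (xent_exchange lt_ac lt_kl).
rewrite !scalerDr !scalerA addrCA; congr (_ + _).
rewrite -[X in X + _]scale1r -scalerDl; congr (_ *: _).
by field; rewrite oppr_eq0 q_neq0.
Qed.

(* [qminor] with the rows given by a function, so that the index type does not depend on the
   row sequence. *)
Definition qdet_rows m (row : nat -> nat) : A :=
  \sum_(s : 'S_m) (- q) ^ (- (perm_len s)%:Z) *: \prod_(t < m) xent x (row t) (s t).

Lemma qdet_rows_swap m (row row' : nat -> nat) (i j : 'I_m) :
  val j = (val i).+1 -> (row j < row i)%N ->
  row' i = row j -> row' j = row i -> (forall t : 'I_m, t != i -> t != j -> row' t = row t) ->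
  qdet_rows m row = (- q)^-1 *: qdet_rows m row'.
Proof.
move=> ji lt_row row'i row'j row'E.
have neq_ij : i != j by rewrite -val_eqE ji neq_ltn ltnSn.
have [P [S [enumE iPS jPS]]] := enum_ord_adjacent ji.
rewrite /qdet_rows !(sum_perm_tperm_pairs _ neq_ij) scaler_sumr.
apply: eq_bigr => s lt_s.
set Pr := \prod_(t <- P) xent x (row t) (s t).
set Po := \prod_(t <- S) xent x (row t) (s t).
have prodE (r : nat -> nat) (s' : 'S_m) :
    {in P ++ S, forall t : 'I_m, r t = row t} -> {in P ++ S, s' =1 s} ->
    \prod_(t < m) xent x (r t) (s' t) = Pr * (xent x (r i) (s' i) * xent x (r j) (s' j)) * Po.
  move=> r_row s'_s; rewrite big_ord_enum enumE big_cat !big_cons /= !mulrA.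
  by congr (_ * _ * _ * _); apply: eq_big_seq => t tQ; rewrite r_row ?s'_s // mem_cat tQ ?orbT.
have off_ij t : t \in P ++ S -> t != i /\ t != j.
  by move=> tPS; split; [apply: contraNneq iPS | apply: contraNneq jPS] => <-.
have row'_row : {in P ++ S, forall t : 'I_m, row' t = row t}.
  by move=> t /off_ij[]; apply: row'E.
have tperm_s : {in P ++ S, (tperm i j * s)%g =1 s}.
  by move=> t /off_ij[ti tj]; rewrite permM tpermD // eq_sym.
rewrite !prodE //; rewrite !permM tpermL tpermR row'i row'j perm_len_tperm // expfzNS.
set c0 := (- q) ^ (- (perm_len s)%:Z).
have ctxD (y z : A) (e : K) :
    c0 *: (Pr * (y + e *: z) * Po) = c0 *: (Pr * y * Po) + (c0 * e) *: (Pr * z * Po).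
  by rewrite mulrDr mulrDl scalerDr -scalerAr -scalerAl scalerA.
by rewrite -!ctxD xent_qdet2_swap // -scalerAr -scalerAl !scalerA mulrC.
Qed.

Lemma qminorE s : qminor q x s = qdet_rows (size s) (nth 0%N (map val s)).
Proof. by []. Qed.

Lemma qminor_swap (P T : seq 'I_n) (a c : 'I_n) : (a < c)%N ->
  qminor q x (P ++ c :: a :: T) = (- q)^-1 *: qminor q x (P ++ a :: c :: T).
Proof.
move=> lt_ac.
have rowE (y z : 'I_n) (t : nat) : (t != size P) -> (t != (size P).+1) ->
    nth 0%N (map val (P ++ y :: z :: T)) t = nth 0%N (map val (P ++ a :: c :: T)) t.
  rewrite !map_cat !nth_cat size_map; case: ltnP => // le_Pt neq_P neq_P1.
  move: neq_P neq_P1; rewrite -(subnK le_Pt).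
  by case: (t - size P)%N => [|[|k]]; rewrite ?add0n ?add1n ?eqxx // addnK.
have nth_size (y z : 'I_n) : nth 0%N (map val (P ++ y :: z :: T)) (size P) = y.
  by rewrite map_cat nth_cat size_map ltnn subnn.
have nth_sizeS (y z : 'I_n) : nth 0%N (map val (P ++ y :: z :: T)) (size P).+1 = z.
  by rewrite map_cat nth_cat size_map ltnNge leqnSn subSnn.
have lt_P : (size P < size (P ++ c :: a :: T))%N by rewrite size_cat addnS ltnS leq_addr.
have lt_P1 : ((size P).+1 < size (P ++ c :: a :: T))%N by rewrite size_cat !addnS !ltnS leq_addr.
rewrite !qminorE; have -> : size (P ++ a :: c :: T) = size (P ++ c :: a :: T) by rewrite !size_cat.
apply: (@qdet_rows_swap _ _ _ (Ordinal lt_P) (Ordinal lt_P1)); rewrite /= ?nth_size ?nth_sizeS //.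
by move=> t; rewrite -!val_eqE /= => neq_P neq_P1; rewrite (rowE c a).
Qed.

Lemma qminor_move (P M T : seq 'I_n) (a : 'I_n) : all (fun b : 'I_n => a < b)%N M ->
  qminor q x (P ++ M ++ a :: T) = (- q) ^ (- (size M)%:Z) *: qminor q x (P ++ a :: M ++ T).
Proof.
elim: M P => [|b M IHM] P /=; first by rewrite scale1r.
case/andP=> lt_ab lt_aM; rewrite -cat_rcons IHM // cat_rcons qminor_swap //.
by rewrite scalerA expfzNS.
Qed.

Definition young_sym_term (I J : seq 'I_n) (L : {set 'I_n}) : A :=
  (- q) ^ (- (seq_len ([seq a <- I | a \notin L] ++ [seq a <- I | a \in L]))%:Z) *:
  (qminor q x [seq a <- I | a \notin L] * qminor q x ([seq a <- I | a \in L] ++ J)).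

Definition young_sym (k : nat) (I J : seq 'I_n) : A :=
  \sum_(L : {set 'I_n} | (L \subset [set a in I]) && (#|L| == k)) young_sym_term I J L.

Lemma young_sym_term_insert (I1 I2 J : seq 'I_n) (a : 'I_n) (L : {set 'I_n}) :
  all (fun b : 'I_n => b < a)%N I1 -> all (fun b : 'I_n => a < b)%N I2 ->
  sorted (relpre val ltn) (I1 ++ I2) ->
  (- q) ^ (- (seq_len ((I1 ++ I2) ++ [:: a]))%:Z) *: young_sym_term (I1 ++ I2) (a :: J) L =
  (- q) ^ (- (2 * count (fun b : 'I_n => (b \in a |: L) && (a < b)%N) (I1 ++ a :: I2))%:Z) *:
    young_sym_term (I1 ++ a :: I2) J (a |: L).
Proof.
move=> /allP lt_I1 /allP gt_I2 sorted_I.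
have inUa : {in I1 ++ I2, forall b, (b \in a |: L) = (b \in L)}.
  move=> b; rewrite in_setU1 mem_cat => /orP[/lt_I1|/gt_I2] lt_ab;
    by rewrite (_ : b == a = false) //; apply/negbTE; rewrite -val_eqE neq_ltn lt_ab ?orbT.
set N1 := [seq b <- I1 | b \notin L]; set N2 := [seq b <- I2 | b \notin L].
set L1 := [seq b <- I1 | b \in L]; set L2 := [seq b <- I2 | b \in L].
have sub_I1 p : {subset [seq b <- I1 | p b] <= I1} by apply: mem_subseq; apply: filter_subseq.
have sub_I2 p : {subset [seq b <- I2 | p b] <= I2} by apply: mem_subseq; apply: filter_subseq.
have notin_aL : [seq b <- I1 ++ a :: I2 | b \notin a |: L] = N1 ++ N2.
  rewrite filter_cat /= setU11 /=; congr (_ ++ _); apply: eq_in_filter => b bI;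
    by rewrite inUa // mem_cat bI ?orbT.
have in_aL : [seq b <- I1 ++ a :: I2 | b \in a |: L] = L1 ++ a :: L2.
  rewrite filter_cat /= setU11 /=; congr (_ ++ _ :: _); apply: eq_in_filter => b bI;
    by rewrite inUa // mem_cat bI ?orbT.
have len_Ia : seq_len ((I1 ++ I2) ++ [:: a]) = (size N2 + size L2)%N.
  rewrite (@seq_len_insert_split _ _ _ [::] [::]) ?cats0 //.
  by rewrite /seq_len inv_count_sorted ?sorted_map // add0n !size_filter addnC count_predC.
have len_aL : seq_len ((N1 ++ N2) ++ L1 ++ a :: L2) =
    (seq_len ((N1 ++ N2) ++ L1 ++ L2) + size N2)%N.
  apply: seq_len_insert_split => b; rewrite mem_cat.
    by case/orP=> /sub_I1/lt_I1.
  by case/orP=> /sub_I2/gt_I2.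
have count_aL : count (fun b : 'I_n => (b \in a |: L) && (a < b)%N) (I1 ++ a :: I2) = size L2.
  rewrite count_cat /= ltnn andbF (count_none_in (s := I1)) => [|b /lt_I1 lt_ba]; last first.
    by rewrite ltnNge ltnW ?andbF.
  rewrite size_filter; apply: eq_in_count => b bI2.
  by rewrite inUa ?gt_I2 ?andbT // mem_cat bI2 orbT.
rewrite /young_sym_term notin_aL in_aL !filter_cat -/N1 -/N2 -/L1 -/L2 len_Ia len_aL count_aL.
rewrite -!catA qminor_move; last by apply/allP => b /sub_I2/gt_I2.
rewrite -scalerAr !scalerA -!expfzDr ?oppr_eq0 //; congr (_ ^ _ *: _).
by rewrite mul2n -addnn !PoszD; ring.
Qed.

Lemma sum_qweight_sorted (l : seq 'I_n) k : sorted (relpre val ltn) l -> size l = k.+1 ->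
  \sum_(a <- l) (- q) ^ ((2 * k)%N%:Z - (2 * count (fun b : 'I_n => a < b)%N l)%N%:Z) =
  \sum_(t < k.+1) q ^+ (2 * t).
Proof.
move=> sorted_l size_l.
rewrite (sum_sorted_count (fun t => (- q) ^ ((2 * k)%N%:Z - (2 * t)%N%:Z))) //; last first.
- by move=> b c e; apply: ltn_trans.
- by move=> b; apply: ltnn.
rewrite size_l (reindex_inj rev_ord_inj); apply: eq_bigr => t _ /=.
have -> : (2 * k)%N%:Z - (2 * (k.+1 - t.+1))%N%:Z = (2 * t)%N%:Z by have := ltn_ord t; lia.
by rewrite -exprnP !exprM sqrrN.
Qed.

Lemma young_sym_insert k (I J : seq 'I_n) (a : 'I_n) : sorted (relpre val ltn) I -> a \in I ->
  (- q) ^ ((2 * k)%N%:Z - (seq_len ([seq b <- I | b != a] ++ [:: a]))%:Z) *: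
    young_sym k [seq b <- I | b != a] (a :: J) =
  \sum_(L : {set 'I_n} | [&& L \subset [set b in I], #|L| == k.+1 & a \in L])
    (- q) ^ ((2 * k)%N%:Z - (2 * count (fun b : 'I_n => (b \in L) && (a < b)%N) I)%N%:Z) *:
    young_sym_term I J L.
Proof.
move=> sorted_I aI.
have lt_trans : transitive (@relpre 'I_n _ val ltn) by move=> b c e; apply: ltn_trans.
case/splitPr: aI sorted_I => I1 I2 sorted_I.
have := sorted_I; rewrite (sorted_pairwise lt_trans) pairwise_cat pairwise_cons allrel_consr.
case/and3P=> /andP[lt_I1 _] _ /andP[gt_I2 _].
have sorted_I12 : sorted (relpre val ltn) (I1 ++ I2).
  by apply: (subseq_sorted lt_trans _ sorted_I); rewrite cat_subseq ?subseq_cons.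
have neq_a : {in I1 ++ I2, forall b, b != a}.
  move=> b; rewrite -val_eqE mem_cat => /orP[/(allP lt_I1)|/(allP gt_I2)] /= lt_ab.
    by rewrite ltn_eqF.
  by rewrite eq_sym ltn_eqF.
have IsE : [seq b <- I1 ++ a :: I2 | b != a] = I1 ++ I2.
  rewrite filter_cat /= eqxx -filter_cat; apply/all_filterP/allP; exact: neq_a.
have setIE : [set b in I1 ++ a :: I2] :\ a = [set b in I1 ++ I2].
  apply/setP => b; rewrite !inE !mem_cat inE.
  by case: eqP => [->|_] //=; apply/esym/negP; rewrite -mem_cat => /neq_a; rewrite eqxx.
rewrite -(sum_subsets_setU1 _ _ (S := [set b in I1 ++ a :: I2])); last by rewrite inE mem_cat inE eqxx orbT.
rewrite /young_sym setIE IsE scaler_sumr; apply: eq_bigr => L _.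
by rewrite !expfzDr ?oppr_eq0 // -!scalerA young_sym_term_insert.
Qed.

Lemma young_symS k (I J : seq 'I_n) : sorted (relpre val ltn) I ->
  \sum_(a <- I) (- q) ^ ((2 * k)%N%:Z - (seq_len ([seq b <- I | b != a] ++ [:: a]))%:Z) *:
    young_sym k [seq b <- I | b != a] (a :: J) =
  (\sum_(t < k.+1) q ^+ (2 * t)) *: young_sym k.+1 I J.
Proof.
move=> sorted_I.
have lt_trans : transitive (@relpre 'I_n _ val ltn) by move=> b c e; apply: ltn_trans.
have uniq_I : uniq I by apply: sorted_uniq sorted_I => // b; apply: ltnn.
rewrite (eq_big_seq _ (fun a aI => young_sym_insert k J sorted_I aI)).
rewrite (exchange_big_dep (fun L : {set 'I_n} => (L \subset [set b in I]) && (#|L| == k.+1))) /=;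
  last by move=> a L _ /and3P[-> ->].
rewrite /young_sym scaler_sumr; apply: eq_bigr => L /andP[sub_LI /eqP card_L].
rewrite -scaler_suml; congr (_ *: _).
rewrite (eq_bigl (fun a => a \in L)) => [|a]; last by rewrite sub_LI card_L eqxx.
rewrite -big_filter -(sum_qweight_sorted (l := [seq b <- I | b \in L])) ?sorted_filter //.
  apply: eq_bigr => a _; rewrite count_filter; congr (_ ^ (_ - (2 * _)%N%:Z)).
  by apply: eq_count => b; rewrite /= andbC.
rewrite -card_L -(card_uniqP (filter_uniq _ uniq_I)); apply: eq_card => b.
by rewrite mem_filter andb_idr // => /(subsetP sub_LI); rewrite inE.
Qed.

End QuantumMinors.

Theorem mainTheorem1 (K : fieldType) (q : K) (A : algType K) (n d r : nat)
    (x : 'I_n -> 'I_d -> A) (I : (d + r).-tuple 'I_n) (J : seq 'I_n) :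
  [pchar K] =i pred0 ->
  q != 0 ->
  (forall k : nat, (0 < k)%N -> q ^+ k != 1) ->
  qgeneric q x ->
  (1 <= r <= d)%N ->
  sorted (fun a b : 'I_n => (val a < val b)%N) I ->
  size J = (d - r)%N ->
  \sum_(s < d + r)
     (let i_s := tnth I s in
      let Is := [seq a <- I | a != i_s] in
      (- q) ^ ((2 * (r - 1))%N%:Z - (seq_len (Is ++ [:: i_s]))%:Z) *:
      \sum_(L : {set 'I_n} | (L \subset [set a in Is]) && (#|L| == r.-1))
         ((- q) ^ (- (seq_len ([seq a <- Is | a \notin L] ++ [seq a <- Is | a \in L]))%:Z) *:
          (qminor q x [seq a <- Is | a \notin L] *
           qminor q x ([seq a <- Is | a \in L] ++ i_s :: J))))
  = (\sum_(t < r) q ^+ (2 * t)) *: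
      \sum_(L : {set 'I_n} | (L \subset [set a in (I : seq 'I_n)]) && (#|L| == r))
         ((- q) ^ (- (seq_len ([seq a <- I | a \notin L] ++ [seq a <- I | a \in L]))%:Z) *:
          (qminor q x [seq a <- I | a \notin L] *
           qminor q x ([seq a <- I | a \in L] ++ J))).
Proof.
move=> _ q_neq0 _ qgen_x /andP[r_gt0 _] sorted_I _.
have := young_symS q_neq0 qgen_x r.-1 J sorted_I.
by rewrite prednK // big_tuple subn1.
Qed.
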